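(* Let $n$ and $k$ be even integers with $1\le k<n/2$. Then $B(n,k)\neq C(n,k)$ if and only if $k^2\equiv\pm1\pmod{n/2}$. Moreover, if $k^2\equiv1\pmod{n/2}$ then $B(n,k)=\langle C(n,k),\lambda\rangle=\langle\rho,\delta,\beta,\lambda\rangle$, and if $k^2\equiv-1\pmod{n/2}$ then $B(n,k)=\langle C(n,k),\tau\rangle=\langle\rho,\delta,\beta,\tau\rangle$.
   Context: $\mathrm{DGP}(n,k)$ ($1\le k<n/2$) is the graph with vertex set $\{(u_i,j),(v_i,j): 0\le i\le n-1,\ j\in\{0,1\}\}$ and edges $\{(u_i,j),(u_{i+1},1-j)\}$ (outer edges, set $\mathcal{O}$), $\{(u_i,j),(v_i,1-j)\}$ (spokes, set $\mathcal{S}$), $\{(v_i,j),(v_{i+k},1-j)\}$ (inner edges, set $\mathcal{I}$), subscripts mod $n$ (the canonical double cover of $\mathrm{GP}(n,k)$). $A(n,k)$ is its automorphism group, $B(n,k)$ the setwise stabilizer of $\mathcal{S}$ in $A(n,k)$, and $C(n,k)$ the subgroup of $A(n,k)$ stabilizing each of $\mathcal{O},\mathcal{I},\mathcal{S}$ setwise. Permutations: $(u_i,j)^\rho=(u_{i+1},j)$, $(v_i,j)^\rho=(v_{i+1},j)$; $(u_i,j)^\delta=(u_{-i},j)$, $(v_i,j)^\delta=(v_{-i},j)$; $(u_i,j)^\beta=(u_i,1-j)$, $(v_i,j)^\beta=(v_i,1-j)$. $\lambda$: if $i+j$ odd, $(u_i,j)\mapsto(v_{1+(i-k)k},j)$,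 $(v_i,j)\mapsto(u_{ik},j)$; if $i+j$ even, $(u_i,j)\mapsto(v_{ik},j)$, $(v_i,j)\mapsto(u_{1+(i-k)k},j)$. $\tau$: if $i+j$ odd, $(u_i,j)\mapsto(v_{-1+(i-k)k},j)$, $(v_i,j)\mapsto(u_{ik},j)$; if $i+j$ even, $(u_i,j)\mapsto(v_{ik},j)$, $(v_i,j)\mapsto(u_{-1+(i-k)k},j)$. *)

From HB Require Import structures.
From mathcomp Require Import all_boot all_order all_fingroup all_algebra.
Set Implicit Arguments. Unset Strict Implicit. Unset Printing Implicit Defensive.
Import GRing.Theory.
Local Open Scope ring_scope.

(* Vertices of DGP(n,k): (s, i, j) with s = false for u_i, s = true for v_i,
   i in Z/nZ, j in {0,1} (j = false is 0, j = true is 1). *)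
Definition V (n : nat) := (bool * 'Z_n * bool)%type.

Definition uu n (i : 'Z_n) (j : bool) : V n := (false, i, j).
Definition vv n (i : 'Z_n) (j : bool) : V n := (true, i, j).

Definition Oedges n : {set {set V n}} :=
  [set [set uu i j; uu (i + 1) (~~ j)] | i : 'Z_n, j : bool].
Definition Sedges n : {set {set V n}} :=
  [set [set uu i j; vv i (~~ j)] | i : 'Z_n, j : bool].
Definition Iedges n (k : nat) : {set {set V n}} :=
  [set [set vv i j; vv (i + k%:R) (~~ j)] | i : 'Z_n, j : bool].
Definition Edges n k : {set {set V n}} := Oedges n :|: Sedges n :|: Iedges n k.

Definition stab_edges n (s : {perm V n}) (E : {set {set V n}}) : bool :=
  [set (s @: e : {set V n}) | e : {set V n} in E] == E.

Definition Aut n k : {set {perm V n}} := [set s | stab_edges s (Edges n k)].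
Definition Bgrp n k : {set {perm V n}} := [set s in Aut n k | stab_edges s (Sedges n)].
Definition Cgrp n k : {set {perm V n}} :=
  [set s in Aut n k | [&& stab_edges s (Oedges n), stab_edges s (Iedges n k)
                        & stab_edges s (Sedges n)]].

Definition rhof n (x : V n) : V n := let: (s, i, j) := x in (s, i + 1, j).
Definition rhoinv n (x : V n) : V n := let: (s, i, j) := x in (s, i - 1, j).
Lemma rhof_inj n : injective (@rhof n).
Proof. apply: (can_inj (g := @rhoinv n)) => -[[s i] j] /=; by rewrite addrK. Qed.
Definition rho n : {perm V n} := perm (@rhof_inj n).

Definition deltaf n (x : V n) : V n := let: (s, i, j) := x in (s, - i, j).
Lemma deltaf_inj n : injective (@deltaf n).
Proof. apply: (can_inj (g := @deltaf n)) => -[[s i] j] /=; by rewrite opprK. Qed.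
Definition delta n : {perm V n} := perm (@deltaf_inj n).

Definition betaf n (x : V n) : V n := let: (s, i, j) := x in (s, i, ~~ j).
Lemma betaf_inj n : injective (@betaf n).
Proof. apply: (can_inj (g := @betaf n)) => -[[s i] j] /=; by rewrite negbK. Qed.
Definition beta n : {perm V n} := perm (@betaf_inj n).

(* the maps lambda and tau (parity of i + j computed on the representative
   0 <= i < n; well defined since n is even in the theorem) *)
Definition lamf n (k : nat) (x : V n) : V n :=
  let: (s, i, j) := x in
  let K : 'Z_n := k%:R in
  if odd (val i + j) then
    (if s then uu (i * K) j else vv (1 + (i - K) * K) j)
  else
    (if s then uu (1 + (i - K) * K) j else vv (i * K) j).

Definition tauf n (k : nat) (x : V n) : V n :=
  let: (s, i, j) := x in
  let K : 'Z_n := k%:R in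
  if odd (val i + j) then
    (if s then uu (i * K) j else vv (-1 + (i - K) * K) j)
  else
    (if s then uu (-1 + (i - K) * K) j else vv (i * K) j).

From mathcomp Require Import all_boot all_order all_fingroup all_algebra.
From mathcomp Require Import ring.
Set Implicit Arguments. Unset Strict Implicit. Unset Printing Implicit Defensive.
Import GRing.Theory.
Local Open Scope ring_scope.

(* The non-spoke edges of DGP(n,k) are the steps x -> fwd x along the outer
   cycle (u_i^j -> u_{i+1}^{1-j}) and the inner cycles (v_i^j -> v_{i+k}^{1-j});
   the spokes join x to spoke x.  A vertex permutation lies in B(n,k) exactly
   when it commutes with spoke and sends every step to a forward or a backward
   step; as no cycle has length 2, it then runs along each cycle in a single
   direction.  If it sends an outer vertex u_i to an inner one, compare the outer
   path of length 2k from u_i with the inner path of length 2 from v_i: their ends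
   are joined by a spoke, so their images force 2k*k = +-2 (mod n), i.e.
   k^2 = +-1 (mod n/2).  Conversely, if 2k^2 = 2e with e = +-1, the map mu
   (lambda for e = 1, tau for e = -1) is in B(n,k) but swaps the two sides, so
   B(n,k) <> C(n,k).  Composing an element of B(n,k) with mu and with powers of
   rho, beta and delta gives one fixing u_0^0 and u_1^1, and such a map is the
   identity: it fixes the outer cycle through u_0^0 and the spoke partners of its
   vertices, and, because 4k <> 0 (mod n), it cannot reverse any inner cycle. *)

Section Doubletons.
Variables aT rT : finType.

Lemma imset_set2 (f : aT -> rT) (a b : aT) : f @: [set a; b] = [set f a; f b].
Proof. by rewrite imsetU1 imset_set1. Qed.

Lemma set2_eq_cases (a b c d : aT) : a != b -> [set a; b] = [set c; d] ->
  (a = c /\ b = d) \/ (a = d /\ b = c).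
Proof.
move=> neq_ab E.
have /set2P Hb : b \in [set c; d] by rewrite -E set22.
have /set2P Ha : a \in [set c; d] by rewrite -E set21.
by case: Ha Hb neq_ab => -> [] ->; rewrite ?eqxx; auto.
Qed.

End Doubletons.

Section DGPEdges.
Variables n k : nat.
Local Notation K := (k%:R : 'Z_n).
Implicit Types (x : V n) (g : {perm V n}).

Definition spoke x : V n := let: (s, i, j) := x in (~~ s, i, ~~ j).
Definition step (s : bool) : 'Z_n := if s then K else 1.
Definition fwd x : V n := let: (s, i, j) := x in (s, i + step s, ~~ j).
Definition bwd x : V n := let: (s, i, j) := x in (s, i - step s, ~~ j).

Lemma spokeK : involutive spoke.
Proof. by case=> [[s i] j] /=; rewrite !negbK. Qed.
Lemma fwdK : cancel fwd bwd.
Proof. by case=> [[s i] j] /=; rewrite negbK addrK. Qed.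
Lemma bwdK : cancel bwd fwd.
Proof. by case=> [[s i] j] /=; rewrite negbK subrK. Qed.

Lemma spoke_side x : (spoke x).1.1 = ~~ x.1.1. Proof. by case: x => [[]]. Qed.
Lemma fwd_side x : (fwd x).1.1 = x.1.1. Proof. by case: x => [[]]. Qed.
Lemma bwd_side x : (bwd x).1.1 = x.1.1. Proof. by case: x => [[]]. Qed.
Lemma spoke_index x : (spoke x).1.2 = x.1.2. Proof. by case: x => [[]]. Qed.

Lemma spoke_neq x : x != spoke x.
Proof. by case: x => [[s i] j]; apply/eqP => -[]; case: s. Qed.
Lemma fwd_neq x : x != fwd x.
Proof. by case: x => [[s i] j]; apply/eqP => -[]; case: j. Qed.
Lemma fwd_neq_spoke x : fwd x != spoke x.
Proof. by case: x => [[s i] j]; apply/eqP => -[]; case: s. Qed.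

Lemma mem_Sedges e : e \in Sedges n <-> exists x, e = [set x; spoke x].
Proof.
split=> [/imset2P[i j _ _ ->] | [[[s i] j] ->]]; first by exists (uu i j).
apply/imset2P; case: s; last by exists i j.
by exists i (~~ j); rewrite //= negbK setUC.
Qed.

Lemma mem_Oedges e : e \in Oedges n <-> exists2 x : V n, ~~ x.1.1 & e = [set x; fwd x].
Proof.
split=> [/imset2P[i j _ _ ->] | [[[[] i] j] //= _ ->]]; first by exists (uu i j).
by apply/imset2P; exists i j.
Qed.

Lemma mem_Iedges e : e \in Iedges n k <-> exists2 x : V n, x.1.1 & e = [set x; fwd x].
Proof.
split=> [/imset2P[i j _ _ ->] | [[[[] i] j] //= _ ->]]; first by exists (vv i j).
by apply/imset2P; exists i j.
Qed.

Lemma mem_Edges e : e \in Edges n k <->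
  (exists x, e = [set x; spoke x]) \/ (exists x, e = [set x; fwd x]).
Proof.
rewrite !inE; split.
- case/orP=> [/orP[/mem_Oedges[x _ ->] | /mem_Sedges] | /mem_Iedges[x _ ->]];
    by [right; exists x | left].
- case=> [/mem_Sedges -> | [[[[] i] j] ->]]; first by rewrite orbT.
    by apply/orP; right; apply/mem_Iedges; exists (true, i, j).
  by apply/orP; left; apply/orP; left; apply/mem_Oedges; exists (false, i, j).
Qed.

Lemma stab_edgesP g (E : {set {set V n}}) :
  reflect (forall e, e \in E -> g @: e \in E) (stab_edges g E).
Proof.
apply: (iffP eqP) => [gE e eE | gE]; first by rewrite -gE imset_f.
apply/eqP; rewrite eqEcard card_imset; last exact/imset_inj/perm_inj.
by rewrite leqnn andbT; apply/subsetP => _ /imsetP[e eE ->]; apply: gE.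
Qed.

Lemma set2_spokeE a b z : a != b -> [set a; b] = [set z; spoke z] -> b = spoke a.
Proof. by move=> neq_ab /(set2_eq_cases neq_ab)[[-> ->] | [-> ->]]; rewrite ?spokeK. Qed.

Lemma set2_fwdE a b z : a != b -> [set a; b] = [set z; fwd z] ->
  b = fwd a \/ b = bwd a.
Proof. by move=> neq_ab /(set2_eq_cases neq_ab)[[-> ->] | [-> ->]]; rewrite ?fwdK; auto. Qed.

Definition compatible g :=
  (forall x, g (spoke x) = spoke (g x)) /\
  (forall x, g (fwd x) = fwd (g x) \/ g (fwd x) = bwd (g x)).

Lemma stab_SedgesP g :
  reflect (forall x, g (spoke x) = spoke (g x)) (stab_edges g (Sedges n)).
Proof.
apply: (iffP (stab_edgesP _ _)) => [gS x | g_spoke e /mem_Sedges[x ->]].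
  have /mem_Sedges[z] := gS _ ((mem_Sedges _).2 (ex_intro _ x erefl)).
  by rewrite imset_set2; apply: set2_spokeE; rewrite (inj_eq perm_inj) spoke_neq.
by rewrite imset_set2 g_spoke; apply/mem_Sedges; exists (g x).
Qed.

Lemma compatible_fwd_edge g x : compatible g ->
  exists2 z, z.1.1 = (g x).1.1 & g @: [set x; fwd x] = [set z; fwd z].
Proof.
case=> _ /(_ x) [] g_fwd; rewrite imset_set2 g_fwd; first by exists (g x).
by exists (bwd (g x)); rewrite ?bwd_side // bwdK setUC.
Qed.

Lemma BgrpP g : reflect (compatible g) (g \in Bgrp n k).
Proof.
rewrite inE; apply: (iffP andP) => [[] | g_compat]; last first.
  have [g_spoke _] := g_compat; split; last exact/stab_SedgesP.
  rewrite inE; apply/stab_edgesP => e /mem_Edges[] [x ->].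
    by rewrite imset_set2 g_spoke; apply/mem_Edges; left; exists (g x).
  by have [z _ ->] := compatible_fwd_edge x g_compat; apply/mem_Edges; right; exists z.
rewrite inE => /stab_edgesP gE /stab_SedgesP g_spoke; split=> // x.
have neq_gx : g x != g (fwd x) by rewrite (inj_eq perm_inj) fwd_neq.
have /gE : [set x; fwd x] \in Edges n k by apply/mem_Edges; right; exists x.
rewrite imset_set2 => /mem_Edges[] [z E]; last exact: set2_fwdE neq_gx E.
have := set2_spokeE neq_gx E; rewrite -g_spoke => /perm_inj/eqP.
by rewrite (negbTE (fwd_neq_spoke x)).
Qed.

Lemma compatible_bwd g x : compatible g ->
  g (bwd x) = fwd (g x) \/ g (bwd x) = bwd (g x).
Proof. by case=> _ /(_ (bwd x)); rewrite bwdK => -[] ->; rewrite ?fwdK ?bwdK; auto. Qed.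

Lemma compatible1 : compatible 1.
Proof. by split=> x; rewrite !perm1; auto. Qed.

Lemma compatibleM g h : compatible g -> compatible h -> compatible (g * h).
Proof.
move=> [g_spoke g_fwd] h_compat; have [h_spoke h_fwd] := h_compat.
split=> x; rewrite !permM; first by rewrite g_spoke h_spoke.
by case: (g_fwd x) => ->; [apply: h_fwd | apply: compatible_bwd].
Qed.

Lemma group_set_Bgrp : group_set (Bgrp n k).
Proof.
apply/group_setP; split; first exact/BgrpP/compatible1.
by move=> g h /BgrpP g_compat /BgrpP h_compat; apply/BgrpP/compatibleM.
Qed.

Canonical Bgrp_group := Group group_set_Bgrp.

Lemma CgrpP g :
  reflect (g \in Bgrp n k /\ forall x, (g x).1.1 = x.1.1) (g \in Cgrp n k).
Proof.
have side_in a b z : [set a; b] = [set z; fwd z] -> a.1.1 = z.1.1.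
  move=> E; have : a \in [set z; fwd z] by rewrite -E set21.
  by case/set2P=> ->; rewrite ?fwd_side.
rewrite [g \in Cgrp n k]inE.
apply: (iffP andP) => [[gA /and3P[gO gI gS]] | [gB g_side]].
  split=> [|x]; first by rewrite inE gA.
  case x_side: x.1.1.
    have /(stab_edgesP _ _ gI) : [set x; fwd x] \in Iedges n k.
      by apply/mem_Iedges; exists x.
    by rewrite imset_set2 => /mem_Iedges[z z_side /side_in ->].
  have /(stab_edgesP _ _ gO) : [set x; fwd x] \in Oedges n.
    by apply/mem_Oedges; exists x; rewrite ?x_side.
  by rewrite imset_set2 => /mem_Oedges[z /negbTE z_side /side_in ->].
have g_compat : compatible g by apply/BgrpP.
move: gB; rewrite inE => /andP[gA gS]; rewrite gS andbT; split=> //.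
apply/andP; split; apply/stab_edgesP.
  move=> _ /mem_Oedges[x x_side ->]; have [z z_side ->] := compatible_fwd_edge x g_compat.
  by apply/mem_Oedges; exists z; rewrite // z_side g_side.
move=> _ /mem_Iedges[x x_side ->]; have [z z_side ->] := compatible_fwd_edge x g_compat.
by apply/mem_Iedges; exists z; rewrite // z_side g_side.
Qed.

Lemma Cgrp_subset_Bgrp : Cgrp n k \subset Bgrp n k.
Proof. by apply/subsetP => g /CgrpP[]. Qed.

Lemma rho_Cgrp : rho n \in Cgrp n k.
Proof.
apply/CgrpP; split=> [|[[s i] j]]; rewrite ?permE //.
by apply/BgrpP; split=> -[[s i] j]; rewrite !permE /=; auto; left; rewrite addrAC.
Qed.

Lemma delta_Cgrp : delta n \in Cgrp n k.
Proof.
apply/CgrpP; split=> [|[[s i] j]]; rewrite ?permE //.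
by apply/BgrpP; split=> -[[s i] j]; rewrite !permE /=; auto; right; rewrite opprD.
Qed.

Lemma beta_Cgrp : beta n \in Cgrp n k.
Proof.
apply/CgrpP; split=> [|[[s i] j]]; rewrite ?permE //.
by apply/BgrpP; split=> -[[s i] j]; rewrite !permE; auto.
Qed.

End DGPEdges.

Arguments spokeK {n}.
Arguments fwdK {n k}.
Arguments bwdK {n k}.

Section Parity.
Variable m : nat.
Local Notation n := m.+2.
Hypothesis n_even : ~~ odd n.

Lemma val_ZpD (a b : 'Z_n) : nat_of_ord (a + b) = ((a + b) %% n)%N.
Proof. by []. Qed.
Lemma val_ZpM (a b : 'Z_n) : nat_of_ord (a * b) = ((a * b) %% n)%N.
Proof. by []. Qed.
Lemma val_ZpN (a : 'Z_n) : nat_of_ord (- a) = ((n - a) %% n)%N.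
Proof. by []. Qed.

Lemma odd_mod_n t : odd (t %% n) = odd t.
Proof. by rewrite odd_mod //; apply/negbTE. Qed.

Lemma oddZp_nat t : odd (t%:R : 'Z_n) = odd t.
Proof. by rewrite val_Zp_nat // odd_mod_n. Qed.

Lemma oddZpD (a b : 'Z_n) : odd (a + b)%R = odd a (+) odd b.
Proof. by rewrite val_ZpD odd_mod_n oddD. Qed.

Lemma oddZpM (a b : 'Z_n) : odd (a * b)%R = odd a && odd b.
Proof. by rewrite val_ZpM odd_mod_n oddM. Qed.

Lemma oddZpN (a : 'Z_n) : odd (- a)%R = odd a.
Proof. by rewrite val_ZpN odd_mod_n oddB ?(negbTE n_even) // ltnW. Qed.

Lemma oddZpB (a b : 'Z_n) : odd (a - b)%R = odd a (+) odd b.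
Proof. by rewrite oddZpD oddZpN. Qed.

Lemma even_Zp_half (d : 'Z_n) : ~~ odd d -> d = ((d : nat)./2)%:R * 2.
Proof.
move=> /negbTE d_even; rewrite -natrM muln2 -[d in LHS]natr_Zp.
by rewrite -[d : nat in LHS]odd_double_half d_even.
Qed.

End Parity.

Lemma natr_Zp_neq0 p t : (0 < t < p)%N -> (t%:R : 'Z_p) != 0.
Proof.
move=> /andP[t_gt0 t_lt]; have p_gt1 := leq_ltn_trans t_gt0 t_lt.
apply/eqP => /(congr1 (@nat_of_ord _)); rewrite val_Zp_nat // modn_small //.
by move=> t0; move: t_gt0; rewrite t0.
Qed.

Section Walks.
Variables m k : nat.
Local Notation n := m.+2.
Local Notation K := (k%:R : 'Z_n).
Local Notation step := (@step n k).
Local Notation fwd := (@fwd n k).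
Local Notation bwd := (@bwd n k).
Local Notation compatible := (@compatible n k).
Implicit Types (x : V n) (g : {perm V n}).

Hypothesis n_even : ~~ odd n.
Hypothesis k_gt0 : (0 < k)%N.
Hypothesis k_small : (k.*2 < n)%N.

Lemma step_double_neq0 s : step s * 2 != 0.
Proof.
rewrite /step; case: s.
  by rewrite -natrM muln2 natr_Zp_neq0 // double_gt0 k_gt0.
by rewrite mul1r natr_Zp_neq0 // (leq_ltn_trans _ k_small) // -addnn (leq_add k_gt0 k_gt0).
Qed.

Lemma fwd2_neq x : fwd (fwd x) != x.
Proof.
case: x => [[s i] j]; apply/eqP => -[] /eqP; rewrite -addrA addrC -subr_eq0 addrK.
by rewrite -mulr2n -mulr_natr (negbTE (step_double_neq0 s)).
Qed.

Lemma compatible_iter g x F : compatible g -> F = fwd \/ F = bwd ->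
  g (fwd x) = F (g x) -> forall t, g (iter t fwd x) = iter t F (g x).
Proof.
move=> g_compat F_dir gF.
have persist y : g (fwd y) = F (g y) -> g (fwd (fwd y)) = F (g (fwd y)).
  move=> gFy; have back : g (fwd (fwd y)) != g y by rewrite (inj_eq perm_inj) fwd2_neq.
  case: F_dir gFy => -> gFy; case: (g_compat.2 (fwd y)) => // g2;
    by rewrite g2 gFy ?fwdK ?bwdK eqxx in back.
have next t : g (iter t.+1 fwd x) = F (g (iter t fwd x)).
  by elim: t => [|t IH] //; apply: persist.
by elim=> [|t IH] //; rewrite next IH.
Qed.

Lemma iter_fwd t s i j : iter t fwd (s, i, j) = (s, i + t%:R * step s, odd t (+) j).
Proof.
elim: t => [|t IH]; first by rewrite mul0r addr0.
by rewrite iterS IH /= mulrSr mulrDl mul1r addrA addNb.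
Qed.

Lemma iter_bwd t s i j : iter t bwd (s, i, j) = (s, i - t%:R * step s, odd t (+) j).
Proof.
elim: t => [|t IH]; first by rewrite mul0r subr0.
by rewrite iterS IH /= mulrSr mulrDl mul1r opprD addrA addNb.
Qed.

Lemma compatible_index g x : compatible g -> exists b : bool, forall t,
  (g (iter t fwd x)).1.2 = (g x).1.2 + (-1) ^+ b * (t%:R * step (g x).1.1).
Proof.
move=> g_compat; case: (g_compat.2 x) => gF; [exists false | exists true] => t;
  rewrite (compatible_iter g_compat _ gF); auto; case: (g x) => [[s i] j].
  by rewrite iter_fwd expr0 mul1r.
by rewrite iter_bwd expr1 mulN1r.
Qed.

Lemma compatible_side_swap g x : compatible g -> ~~ x.1.1 -> (g x).1.1 ->
  exists b : bool, K * K * 2 = (-1) ^+ b * 2.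
Proof.
move=> g_compat x_u gx_v.
have path : iter k.*2 fwd x = spoke (iter 2 fwd (spoke x)).
  case: x x_u {gx_v} => [[[] i] j] // _.
  rewrite [spoke (false, i, j)]/= !iter_fwd [spoke _]/= -[step false]/1.
  by rewrite odd_double negbK -addnn natrD; congr (_, _, _); ring.
have [b1 walk_x] := compatible_index x g_compat.
have [b2 walk_sx] := compatible_index (spoke x) g_compat.
have : (g (iter k.*2 fwd x)).1.2 = (g (iter 2 fwd (spoke x))).1.2.
  by rewrite path g_compat.1 spoke_index.
rewrite walk_x walk_sx g_compat.1 spoke_side spoke_index gx_v.
move=> /addrI /(congr1 ( *%R ((-1) ^+ b1))); rewrite signrMK mulr1 => E.
by exists (b1 (+) b2); rewrite signr_addb -[RHS]mulrA -E -[step true]/K -addnn natrD; ring.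
Qed.

Lemma natr_double_eq a b : ((a * 2)%:R : 'Z_n) = (b * 2)%:R <-> a = b %[mod n./2].
Proof.
set h := n./2; have n2 : n = (h * 2)%N.
  by rewrite muln2 -[n in LHS]odd_double_half (negbTE n_even).
split=> [/(congr1 (@nat_of_ord _)) | E]; last first.
  by apply: ord_inj; rewrite !val_Zp_nat // n2 -!muln_modl // E.
by rewrite !val_Zp_nat // n2 -!muln_modl // => /eqP; rewrite eqn_mul2r => /eqP.
Qed.

Lemma sqK_signP (b : bool) : K * K * 2 = (-1) ^+ b * 2 <->
  (if b then k ^ 2 + 1 = 0 %[mod n./2] else k ^ 2 = 1 %[mod n./2])%N.
Proof.
rewrite -!natrM mulnn; case: b.
  rewrite -(natr_double_eq (k ^ 2 + 1) 0) mulnDl natrD mul0n mulr0n mul1n expr1 mulN1r.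
  by split=> [-> | /eqP]; [rewrite addNr | rewrite addr_eq0 => /eqP].
by rewrite -(natr_double_eq _ 1) expr0 mul1r.
Qed.

Lemma Bgrp_neq_Cgrp_sign :
  Bgrp n k != Cgrp n k -> exists b : bool, K * K * 2 = (-1) ^+ b * 2.
Proof.
move=> BneC; have /subsetPn[g gB gNC] : ~~ (Bgrp n k \subset Cgrp n k).
  by apply: contra BneC => BsubC; rewrite eqEsubset BsubC Cgrp_subset_Bgrp.
have g_compat : compatible g by apply/BgrpP.
have /forallPn[x x_side] : ~~ [forall x, (g x).1.1 == x.1.1].
  by apply: contra gNC => /forallP g_side; apply/CgrpP; split=> // x; apply/eqP.
wlog x_u : x x_side / ~~ x.1.1.
  move=> gen; have [x_v | x_u] := boolP x.1.1; last exact: (gen x).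
  by apply: (gen (spoke x)); rewrite ?g_compat.1 !spoke_side ?negbK ?(inj_eq negb_inj).
apply: (compatible_side_swap g_compat x_u).
by move: x_side; rewrite (negbTE x_u); case: (g x).1.1.
Qed.

End Walks.

Lemma signr_cases (R : pzRingType) (b : bool) : (-1) ^+ b = 1 :> R \/ (-1) ^+ b = -1 :> R.
Proof. by case: b; [right | left]. Qed.

Section Mu.
Variables (m k : nat) (b : bool).
Local Notation n := m.+2.
Local Notation K := (k%:R : 'Z_n).
Local Notation e := ((-1) ^+ b : 'Z_n).
Local Notation fwd := (@fwd n k).
Local Notation bwd := (@bwd n k).
Local Notation compatible := (@compatible n k).
Implicit Type x : V n.

Hypothesis n_even : ~~ odd n.
Hypothesis k_even : ~~ odd k.
Hypothesis sqK_sign : K * K * 2 = e * 2.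

Lemma odd_K : odd K = false.
Proof. by rewrite oddZp_nat //; apply/negbTE. Qed.

Lemma odd_sign : odd e.
Proof. by case: (signr_cases 'Z_n b) => ->; rewrite ?oddZpN // (oddZp_nat n_even 1). Qed.

Lemma mulK_inj (i i' : 'Z_n) : odd i = odd i' -> i * K = i' * K -> i = i'.
Proof.
move=> same_parity eqK; apply/eqP; rewrite -subr_eq0; apply/eqP.
have d_even : ~~ odd (i - i')%R by rewrite oddZpB // same_parity addbb.
have dK : (i - i') * K = 0 by rewrite mulrBl eqK subrr.
have [c d_double] : exists c, i - i' = c * 2 := ex_intro _ _ (even_Zp_half d_even).
rewrite d_double in dK *.
have c2e : c * 2 * e = 0.
  rewrite -mulrA [2 * _]mulrC -sqK_sign.
  have -> : c * (K * K * 2) = c * 2 * K * K by ring.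
  by rewrite dK mul0r.
by rewrite -(signrMK b (c * 2)) [_ * (c * 2)]mulrC c2e mulr0.
Qed.

Definition mu_fun x : V n :=
  let: (s, i, j) := x in
  (~~ s, if odd (i + j)%N == s then i * K else e + (i - K) * K, j).

Lemma mu_fun_side x : (mu_fun x).1.1 = ~~ x.1.1.
Proof. by case: x => [[]]. Qed.

Lemma mu_fun_spoke x : mu_fun (spoke x) = spoke (mu_fun x).
Proof.
by case: x => [[s i] j] /=; rewrite !oddD !oddb; case: s; case: j; case: (odd i).
Qed.

Lemma mu_fun_fwd x : mu_fun (fwd x) = fwd (mu_fun x) \/ mu_fun (fwd x) = bwd (mu_fun x).
Proof.
case: x => [[[] i] j] /=.
  have -> : odd ((i + K)%R + ~~ j)%N = ~~ odd (i + j)%N.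
    by rewrite !oddD oddZpD // odd_K !oddb addbF addbN.
  set idx := if odd (i + j)%N == true then _ else _.
  have -> : (if ~~ odd (i + j)%N == true then (i + K) * K else e + (i + K - K) * K)
            = idx + e.
    rewrite /idx; case: (odd _) => /=; first by ring.
    have -> : (i + K) * K = (i - K) * K + K * K * 2 by ring.
    by rewrite sqK_sign; ring.
  by case: (signr_cases 'Z_n b) => ->; [left | right].
have -> : odd ((i + 1)%R + ~~ j)%N = odd (i + j)%N.
  by rewrite !oddD oddZpD // (oddZp_nat n_even 1) !oddb; case: (odd i); case: j.
by left; case: (_ == false); congr (_, _, _); ring.
Qed.

Lemma mu_fun_inj : injective mu_fun.
Proof.
have idx_parity s (i : 'Z_n) (j : bool) :
    odd (if odd (i + j)%N == s then i * K else e + (i - K) * K)%R = (odd (i + j)%N != s).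
  by case: ifP => _; rewrite ?oddZpD ?oddZpM ?odd_K ?andbF ?odd_sign.
move=> [[s i] j] [[s' i'] j'] /= [/negb_inj s_eq E j_eq]; subst s' j'.
have branch_eq : (odd (i + j)%N == s) = (odd (i' + j)%N == s).
  by apply/negb_inj; rewrite -!idx_parity E.
have parity_eq : odd i = odd i'.
  by move: branch_eq E; rewrite !oddD; case: (odd i); case: (odd i'); case: s; case: j.
rewrite -branch_eq in E; congr (_, _, _); apply: mulK_inj parity_eq _.
by case: ifP E => _ // /addrI; rewrite !mulrBl => /addIr.
Qed.

Definition mu := perm mu_fun_inj.

Lemma compatible_mu : compatible mu.
Proof. by split=> x; rewrite !permE; [apply: mu_fun_spoke | apply: mu_fun_fwd]. Qed.

Lemma mu_Bgrp : mu \in Bgrp n k.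
Proof. exact/BgrpP/compatible_mu. Qed.

Lemma mu_notin_Cgrp : mu \notin Cgrp n k.
Proof.
apply/negP => /CgrpP[_ /(_ (uu 0 false))].
by rewrite permE mu_fun_side.
Qed.

Lemma Bgrp_neq_Cgrp : Bgrp n k != Cgrp n k.
Proof. by apply: contraNneq mu_notin_Cgrp => <-; apply: mu_Bgrp. Qed.

End Mu.

Lemma iter_rho n t s (i : 'Z_n) j : iter t (rho n) (s, i, j) = (s, i + t%:R, j).
Proof.
elim: t => [|t IH]; first by rewrite addr0.
by rewrite iterS IH permE /= mulrSr addrA.
Qed.

Section Reduction.
Variables (m k : nat) (b : bool).
Local Notation n := m.+2.
Local Notation K := (k%:R : 'Z_n).
Local Notation e := ((-1) ^+ b : 'Z_n).
Local Notation step := (@step n k).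
Local Notation fwd := (@fwd n k).
Local Notation bwd := (@bwd n k).
Local Notation compatible := (@compatible n k).
Local Notation x0 := (uu 0 false : V n).
Implicit Types (x : V n) (g : {perm V n}).

Hypothesis n_even : ~~ odd n.
Hypothesis k_even : ~~ odd k.
Hypothesis k_gt0 : (0 < k)%N.
Hypothesis k_small : (k.*2 < n)%N.
Hypothesis sqK_sign : K * K * 2 = e * 2.

Local Notation mu := (mu n_even k_even sqK_sign).
Local Notation G := (<< [set rho n; delta n; beta n; mu] >>)%g.

Lemma four_lt_n : (4 < n)%N.
Proof.
have k_ge2 : (2 <= k)%N by case: k k_gt0 k_even => [|[]].
by apply: leq_ltn_trans k_small; rewrite -[4%N]/(2.*2) leq_double.
Qed.

Lemma four_K_neq0 : K * 4 != 0.
Proof.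
apply/eqP => K4; have : e * (K * K * 2 * 2) = 0.
  have -> : K * K * 2 * 2 = K * (K * 4) by ring.
  by rewrite K4 !mulr0.
rewrite sqK_sign -!mulrA signrMK -natrM => /eqP.
by rewrite (negbTE (natr_Zp_neq0 _)) // four_lt_n.
Qed.

Lemma fwd2_neq_bwd2 x : x.1.1 -> iter 2 fwd x != iter 2 bwd x.
Proof.
case: x => [[[] i] j] // _; rewrite iter_fwd iter_bwd -[step true]/K.
apply/eqP => /(congr1 (fun y : V n => y.1.2)) /= /eqP; rewrite -subr_eq0.
have -> : i + 2%:R * K - (i - 2%:R * K) = K * 4 by ring.
by rewrite (negbTE four_K_neq0).
Qed.

Definition class0 x := let: (s, i, j) := x in j == odd i (+) s.

Lemma class0E s i j : class0 (s, i, j) = (j == odd i (+) s).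
Proof. by []. Qed.

Lemma class0_fwd x : class0 (fwd x) = class0 x (+) x.1.1.
Proof.
case: x => [[[] i] j]; rewrite [fwd _]/= !class0E oddZpD // ?odd_K ?(oddZp_nat n_even 1) //.
  by case: j; case: (odd i).
by case: j; case: (odd i).
Qed.

Lemma class0_bwd x : class0 (bwd x) = class0 x (+) x.1.1.
Proof. by rewrite -{2}(bwdK (k := k) x) class0_fwd bwd_side -addbA addbb addbF. Qed.

Lemma compatible_fix_edge_id g : compatible g -> g x0 = x0 -> g (fwd x0) = fwd x0 -> g = 1%g.
Proof.
move=> g_compat gx0 gfx0; have [g_spoke g_fwd] := g_compat.
(* g fixes the outer cycle through x0 and, via spokes, all of class0.  Every
   other inner vertex is the midpoint of an inner path of length 2 with ends in
   class0, which g cannot reverse since 4k <> 0; the rest are spoke partners. *)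
have fix_outer (i : 'Z_n) : g (false, i, odd i) = (false, i, odd i).
  have gF : g (fwd x0) = fwd (g x0) by rewrite gx0.
  have := compatible_iter k_gt0 k_small g_compat (or_introl erefl) gF i.
  by rewrite gx0 iter_fwd add0r -[step false]/1 mulr1 natr_Zp addbF.
have fix_class0 x : class0 x -> g x = x.
  case: x => [[s i] j]; rewrite class0E => /eqP ->.
  case: s; last by rewrite addbF fix_outer.
  by rewrite addbT -[(true, i, _)]/(spoke (false, i, odd i)) g_spoke fix_outer.
have fix_inner x : x.1.1 -> g x = x.
  move=> x_v; case c0 : (class0 x); first exact: fix_class0.
  have y_fixed : g (bwd x) = bwd x by apply: fix_class0; rewrite class0_bwd c0 x_v.
  case: (g_fwd (bwd x)) => gy; first by rewrite bwdK y_fixed bwdK in gy.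
  have c2 : class0 (fwd (fwd (bwd x))).
    by rewrite !class0_fwd !fwd_side bwd_side class0_bwd c0 x_v.
  have := compatible_iter k_gt0 k_small g_compat (or_intror erefl) gy 2.
  rewrite y_fixed (fix_class0 _ c2) => /eqP.
  by rewrite (negbTE (fwd2_neq_bwd2 _)) // bwd_side.
apply/permP => x; rewrite perm1; case x_side: x.1.1; first exact: fix_inner.
by rewrite -(spokeK x) g_spoke fix_inner // spoke_side x_side.
Qed.

Lemma gen_subset_Bgrp : G \subset Bgrp n k.
Proof.
have CB := subsetP (Cgrp_subset_Bgrp n k).
rewrite gen_subG !subUset !sub1set (mu_Bgrp n_even k_even sqK_sign).
by rewrite !CB ?rho_Cgrp ?delta_Cgrp ?beta_Cgrp.
Qed.

Lemma gen_compatible h : h \in G -> compatible h.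
Proof. by move=> /(subsetP gen_subset_Bgrp) /BgrpP. Qed.

Lemma compatible_fix_x0_gen g : compatible g -> g x0 = x0 -> g \in G.
Proof.
move=> g_compat gx0; have delta_G : delta n \in G by rewrite mem_gen // !inE eqxx !orbT.
case: (g_compat.2 x0); rewrite gx0 => gfx0.
  by rewrite (compatible_fix_edge_id g_compat gx0 gfx0) group1.
have gd_compat := compatibleM g_compat (gen_compatible delta_G).
rewrite -(groupMr _ delta_G) (compatible_fix_edge_id gd_compat) ?group1 //.
  by rewrite permM gx0 permE /= oppr0.
by rewrite permM gfx0 permE /=; congr (_, _, _); ring.
Qed.

Lemma gen_transitive x : exists2 h, h \in G & h x = x0.
Proof.
have [rho_G beta_G mu_G] : [/\ rho n \in G, beta n \in G & mu \in G].
  by split; rewrite mem_gen // !inE eqxx ?orbT.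
have outer i j : exists2 h, h \in G & h (false, i, j) = x0.
  exists (rho n ^+ (n - i) * beta n ^+ j)%g; first by rewrite groupM ?groupX.
  rewrite permM permX iter_rho natrB ?(ltnW (ltn_ord i)) // pchar_Zp // natr_Zp.
  by rewrite sub0r addrN; case: j; rewrite ?expg1 ?expg0 ?perm1 ?permE.
case: x => [[[] i] j]; last exact: outer.
have [h hG hx] := outer (mu (true, i, j)).1.2 j.
exists (mu * h)%g; first exact: groupM.
by rewrite permM -hx; congr (h _); rewrite !permE.
Qed.

Lemma Bgrp_subset_gen : Bgrp n k \subset G.
Proof.
apply/subsetP => g /BgrpP g_compat; have [h hG hgx0] := gen_transitive (g x0).
rewrite -(groupMr _ hG); apply: compatible_fix_x0_gen; last by rewrite permM.
exact: compatibleM g_compat (gen_compatible hG).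
Qed.

Lemma Bgrp_gen : Bgrp n k = G.
Proof. by apply/eqP; rewrite eqEsubset Bgrp_subset_gen gen_subset_Bgrp. Qed.

Lemma Bgrp_gen_Cgrp : Bgrp n k = << Cgrp n k :|: [set mu] >>%g.
Proof.
apply/eqP; rewrite eqEsubset gen_subG subUset sub1set Cgrp_subset_Bgrp.
rewrite (mu_Bgrp n_even k_even sqK_sign) andbT Bgrp_gen genS //.
by rewrite !subUset !sub1set !in_setU !in_set1 eqxx rho_Cgrp delta_Cgrp beta_Cgrp !orbT.
Qed.

End Reduction.

Section LambdaTau.
Variables m k : nat.
Local Notation K := (k%:R : 'Z_m.+2).
Hypothesis n_even : ~~ odd m.+2.
Hypothesis k_even : ~~ odd k.

Lemma mu_lamf (sqK : K * K * 2 = (-1) ^+ false * 2) : mu n_even k_even sqK =1 lamf k.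
Proof. by case=> [[[] i] j]; rewrite permE /=; case: (odd _). Qed.

Lemma mu_tauf (sqK : K * K * 2 = (-1) ^+ true * 2) : mu n_even k_even sqK =1 tauf k.
Proof. by case=> [[[] i] j]; rewrite permE /=; case: (odd _). Qed.

End LambdaTau.

Local Close Scope ring_scope.

Theorem lemma5p4 (n k : nat) :
  ~~ odd n -> ~~ odd k -> (1 <= k)%N -> (k.*2 < n)%N ->
  (Bgrp n k != Cgrp n k <->
     (k ^ 2 = 1 %[mod n./2] \/ k ^ 2 + 1 = 0 %[mod n./2]))
  /\ (k ^ 2 = 1 %[mod n./2] ->
      exists lam : {perm V n}, (forall x, lam x = lamf k x) /\
        Bgrp n k = (<< Cgrp n k :|: [set lam] >>)%g /\
        Bgrp n k = (<< [set rho n; delta n; beta n; lam] >>)%g)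
  /\ (k ^ 2 + 1 = 0 %[mod n./2] ->
      exists tau : {perm V n}, (forall x, tau x = tauf k x) /\
        Bgrp n k = (<< Cgrp n k :|: [set tau] >>)%g /\
        Bgrp n k = (<< [set rho n; delta n; beta n; tau] >>)%g).
Proof.
case: n => [|[|m]] // n_even k_even k_gt0 k_small.
have sign b := sqK_signP k n_even b.
split; [split | split].
- by case/(Bgrp_neq_Cgrp_sign k_gt0 k_small) => -[] /sign; auto.
- by case=> [/(sign false) | /(sign true)] sqK; apply: Bgrp_neq_Cgrp n_even k_even sqK.
- move/(sign false) => sqK; exists (mu n_even k_even sqK); split; first exact: mu_lamf.
  by split; [apply: Bgrp_gen_Cgrp | apply: Bgrp_gen].
- move/(sign true) => sqK; exists (mu n_even k_even sqK); split; first exact: mu_tauf.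
  by split; [apply: Bgrp_gen_Cgrp | apply: Bgrp_gen].
Qed.
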